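(* Let $n\geq 1$, let $M$ be a message and $\phi$ a formula, and let $\heartsuit_1,\dots,\heartsuit_n$ be modal prefixes each of which is either $[M]$ or $\langle M\rangle$ (same $M$ throughout). (1) If all $\heartsuit_i$ are $[M]$, then $\vdash(\heartsuit_1\cdots\heartsuit_n\phi)\leftrightarrow[M]\phi$. (2) If at least one $\heartsuit_i$ is $\langle M\rangle$, then $\vdash(\heartsuit_1\cdots\heartsuit_n\phi)\leftrightarrow\langle M\rangle\phi$.
   Context: Fix a finite set $\mathcal{A}$ of agent names containing a distinguished name $\mathsf{CM}$. Messages: $M ::= a \mid B \mid (M,M)$ with $a\in\mathcal{A}$, $B$ optional application-specific data constants, $(M,M')$ pairs. $\mathcal{P}$ is a denumerable set of propositional variables containing atoms $\mathsf{k}_a(M)$ for all $a\in\mathcal{A}$ and messages $M$. Formulas: $\phi ::= P \mid \phi\wedge\phi \mid \phi\vee\phi \mid \neg\phi \mid \phi\to\phi \mid [M]\phi$. Abbreviations: $\mathrm{true}:=\mathsf{k}_{\mathsf{CM}}(\mathsf{CM})$, $\mathrm{false}:=\neg\mathrm{true}$, $\phi\leftrightarrow\psi:=(\phi\to\psi)\wedge(\psi\to\phi)$, $\langle M\rangle\phi:=\neg\neg(\mathsf{k}_{\mathsf{CM}}(M)\wedge\phi)$. LIiP is the smallest set of formulas that contains all instances of: the axioms of an adequate Hilbert axiomatization of intuitionistic propositional logic; $\mathsf{k}_a(a)$; $(\mathsf{k}_a(M)\wedge\mathsf{k}_a(M'))\leftrightarrow\mathsf{k}_a((M,M'))$; $[M]\mathsf{k}_{\mathsf{CM}}(M)$;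 $[M](\phi\to\psi)\to([M]\phi\to[M]\psi)$; $[M]\phi\to(\mathsf{k}_{\mathsf{CM}}(M)\to\phi)$; $[M]\phi\to\langle M\rangle\phi$; $\phi\to[M]\phi$; and is closed under modus ponens and the rule: if $\mathsf{k}_{\mathsf{CM}}(M)\to\mathsf{k}_{\mathsf{CM}}(M')$ is in the set then so is $[M']\phi\to[M]\phi$ for every $\phi$. Write $\vdash\phi$ for $\phi\in\mathrm{LIiP}$. *)

From mathcomp Require Import all_boot.
Set Implicit Arguments. Unset Strict Implicit. Unset Printing Implicit Defensive.

Section LIiP.
(* A : finite set of agent names, CM : distinguished agent,
   Data : application-specific data constants (possibly empty). *)
Variables (A : finType) (CM : A) (Data : Type).

Inductive msg : Type :=
| MAgent : A -> msg
| MData : Data -> msg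
| MPair : msg -> msg -> msg.

(* Propositional variables: the atoms k_a(M) together with denumerably many
   further variables. *)
Inductive pvar : Type :=
| Kn : A -> msg -> pvar
| PV : nat -> pvar.

Inductive form : Type :=
| FVar : pvar -> form
| FAnd : form -> form -> form
| FOr : form -> form -> form
| FNot : form -> form
| FImp : form -> form -> form
| FBox : msg -> form -> form.

Definition Kf (a : A) (M : msg) : form := FVar (Kn a M).
Definition FTrue : form := Kf CM (MAgent CM).
Definition FFalse : form := FNot FTrue.
Definition FIff (p q : form) : form := FAnd (FImp p q) (FImp q p).
Definition FDia (M : msg) (p : form) : form :=
  FNot (FNot (FAnd (Kf CM M) p)).

Inductive prov : form -> Prop :=
| ax_K p q : prov (FImp p (FImp q p))
| ax_S p q r : prov (FImp (FImp p (FImp q r)) (FImp (FImp p q) (FImp p r)))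
| ax_andI p q : prov (FImp p (FImp q (FAnd p q)))
| ax_andE1 p q : prov (FImp (FAnd p q) p)
| ax_andE2 p q : prov (FImp (FAnd p q) q)
| ax_orI1 p q : prov (FImp p (FOr p q))
| ax_orI2 p q : prov (FImp q (FOr p q))
| ax_orE p q r : prov (FImp (FImp p r) (FImp (FImp q r) (FImp (FOr p q) r)))
| ax_notI p q : prov (FImp (FImp p q) (FImp (FImp p (FNot q)) (FNot p)))
| ax_notE p q : prov (FImp (FNot p) (FImp p q))
| ax_kself a : prov (Kf a (MAgent a))
| ax_kpair a M M' :
    prov (FIff (FAnd (Kf a M) (Kf a M')) (Kf a (MPair M M')))
| ax_boxk M : prov (FBox M (Kf CM M))
| ax_boxK M p q : prov (FImp (FBox M (FImp p q)) (FImp (FBox M p) (FBox M q)))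
| ax_boxT M p : prov (FImp (FBox M p) (FImp (Kf CM M) p))
| ax_boxdia M p : prov (FImp (FBox M p) (FDia M p))
| ax_persist M p : prov (FImp p (FBox M p))
| r_mp p q : prov (FImp p q) -> prov p -> prov q
| r_mono M M' p :
    prov (FImp (Kf CM M) (Kf CM M')) -> prov (FImp (FBox M' p) (FBox M p)).

Inductive modality : Type := MBox | MDia.

Definition apply_mod (M : msg) (h : modality) (p : form) : form :=
  match h with MBox => FBox M p | MDia => FDia M p end.

Definition apply_prefix (M : msg) (hs : seq modality) (p : form) : form :=
  foldr (apply_mod M) p hs.

End LIiP.

Definition is_box (h : modality) : bool := if h is MBox then true else false.

(* Every prefix collapses pairwise: [M][M] and <M><M> are idempotent, and a box
   next to a diamond is absorbed by it.  The box cases use [M]k(M) and the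
   persistence axiom; the diamond cases use that <M> is a double negation, and
   triple negation reduces to single negation intuitionistically. *)
From mathcomp Require Import all_boot.
From Stdlib Require List.

Set Implicit Arguments.

Section LIiPTheory.
Variables (A : finType) (CM : A) (Data : Type).
Notation form := (form A Data).
Notation prov := (prov CM).
Notation FDia := (FDia CM).
Implicit Types (p q r : form) (G : list form) (M : msg A Data) (h : modality).

Inductive der G : form -> Prop :=
| der_prov p : prov p -> der G p
| der_hyp p : List.In p G -> der G p
| der_mp p q : der G (FImp p q) -> der G p -> der G q.
Arguments der_prov {G p}.
Arguments der_hyp {G p}.
Arguments der_mp {G p q}.

Lemma prov_imp_refl p : prov (FImp p p).
Proof.
exact: r_mp (r_mp (ax_S CM p (FImp p p) p) (ax_K CM p (FImp p p))) (ax_K CM p p).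
Qed.

Lemma der_deduction G p q : der (p :: G) q -> der G (FImp p q).
Proof.
elim=> [r Hr|r [<-|Hin]|r s _ IH1 _ IH2].
- exact: der_mp (der_prov (ax_K CM r p)) (der_prov Hr).
- exact: der_prov (prov_imp_refl _).
- exact: der_mp (der_prov (ax_K CM r p)) (der_hyp Hin).
- exact: der_mp (der_mp (der_prov (ax_S _ _ _ _)) IH1) IH2.
Qed.

Lemma prov_of_der_nil p : der nil p -> prov p.
Proof. by elim=> [//|q []|q r _ H1 _ H2]; apply: r_mp H1 H2. Qed.

Lemma prov_imp_of_der p q : der [:: p] q -> prov (FImp p q).
Proof. by move/der_deduction/prov_of_der_nil. Qed.

Lemma der_weaken G p q : der G q -> der (p :: G) q.
Proof.
elim=> [r Hr|r Hr|r s _ H1 _ H2].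
- exact: der_prov.
- by apply: der_hyp; right.
- exact: der_mp H1 H2.
Qed.

Lemma der_top G p : der (p :: G) p.
Proof. by apply: der_hyp; left. Qed.

Lemma der_andI G p q : der G p -> der G q -> der G (FAnd p q).
Proof. by move=> Hp Hq; apply: der_mp (der_mp (der_prov (ax_andI _ _ _)) Hp) Hq. Qed.

Lemma der_andE1 G p q : der G (FAnd p q) -> der G p.
Proof. exact: der_mp (der_prov (ax_andE1 _ _ _)). Qed.

Lemma der_andE2 G p q : der G (FAnd p q) -> der G q.
Proof. exact: der_mp (der_prov (ax_andE2 _ _ _)). Qed.

Lemma der_notI G p q : der (p :: G) q -> der (p :: G) (FNot q) -> der G (FNot p).
Proof.
move=> /der_deduction H1 /der_deduction H2.
exact: der_mp (der_mp (der_prov (ax_notI _ _ _)) H1) H2.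
Qed.

Lemma prov_imp_trans p q r : prov (FImp p q) -> prov (FImp q r) -> prov (FImp p r).
Proof.
move=> Hpq Hqr; apply: prov_imp_of_der.
exact: der_mp (der_prov Hqr) (der_mp (der_prov Hpq) (der_top _ _)).
Qed.

Lemma prov_iffI p q : prov (FImp p q) -> prov (FImp q p) -> prov (FIff p q).
Proof. by move=> Hpq Hqp; apply: r_mp (r_mp (ax_andI _ _ _) Hpq) Hqp. Qed.

Lemma prov_iffl p q : prov (FIff p q) -> prov (FImp p q).
Proof. exact: r_mp (ax_andE1 _ _ _). Qed.

Lemma prov_iffr p q : prov (FIff p q) -> prov (FImp q p).
Proof. exact: r_mp (ax_andE2 _ _ _). Qed.

Lemma prov_iff_refl p : prov (FIff p p).
Proof. exact: prov_iffI (prov_imp_refl _) (prov_imp_refl _). Qed.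

Lemma prov_iff_trans p q r : prov (FIff p q) -> prov (FIff q r) -> prov (FIff p r).
Proof.
move=> Hpq Hqr; apply: prov_iffI.
- exact: prov_imp_trans (prov_iffl Hpq) (prov_iffl Hqr).
- exact: prov_imp_trans (prov_iffr Hqr) (prov_iffr Hpq).
Qed.

Lemma prov_dneg_intro p : prov (FImp p (FNot (FNot p))).
Proof.
apply: prov_imp_of_der; apply: (@der_notI _ _ p).
- exact: der_weaken (der_top _ _).
- exact: der_top.
Qed.

Lemma prov_dneg_mono p q :
  prov (FImp p q) -> prov (FImp (FNot (FNot p)) (FNot (FNot q))).
Proof.
move=> Hpq; apply: prov_imp_of_der; apply: (@der_notI _ _ (FNot p)).
- apply: (@der_notI _ _ q); last exact: der_weaken (der_top _ _).
  exact: der_mp (der_prov Hpq) (der_top _ _).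
- exact: der_weaken (der_top _ _).
Qed.

Lemma prov_tneg_elim p : prov (FImp (FNot (FNot (FNot p))) (FNot p)).
Proof.
apply: prov_imp_of_der; apply: (@der_notI _ _ (FNot (FNot p))).
- exact: der_mp (der_prov (prov_dneg_intro p)) (der_top _ _).
- exact: der_weaken (der_top _ _).
Qed.

Lemma box_nec M p : prov p -> prov (FBox M p).
Proof. exact: r_mp (ax_persist _ _ _). Qed.

Lemma box_mono M p q : prov (FImp p q) -> prov (FImp (FBox M p) (FBox M q)).
Proof. by move=> Hpq; apply: r_mp (ax_boxK _ _ _ _) (box_nec M Hpq). Qed.

Lemma dia_mono M p q : prov (FImp p q) -> prov (FImp (FDia M p) (FDia M q)).
Proof.
move=> Hpq; apply/prov_dneg_mono/prov_imp_of_der/der_andI.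
- exact: der_andE1 (der_top _ _).
- exact: der_mp (der_prov Hpq) (der_andE2 (der_top _ _)).
Qed.

Lemma apply_mod_congr M h p q :
  prov (FIff p q) -> prov (FIff (apply_mod CM M h p) (apply_mod CM M h q)).
Proof.
move=> Hpq; case: h; apply: prov_iffI.
- exact: box_mono (prov_iffl Hpq).
- exact: box_mono (prov_iffr Hpq).
- exact: dia_mono (prov_iffl Hpq).
- exact: dia_mono (prov_iffr Hpq).
Qed.

Lemma box_box M p : prov (FIff (FBox M (FBox M p)) (FBox M p)).
Proof.
apply: prov_iffI; last exact: ax_persist.
have boxT := box_mono M (ax_boxT CM M p).
apply: prov_imp_of_der.
exact: der_mp (der_mp (der_prov (ax_boxK CM M (Kf CM M) p))
  (der_mp (der_prov boxT) (der_top _ _))) (der_prov (ax_boxk CM M)).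
Qed.

Lemma dia_dia M p : prov (FIff (FDia M (FDia M p)) (FDia M p)).
Proof.
apply: prov_iffI.
- apply: prov_imp_trans (prov_tneg_elim _).
  by apply/prov_dneg_mono/prov_imp_of_der; apply: der_andE2 (der_top _ _).
- apply/prov_dneg_mono/prov_imp_of_der/der_andI; first exact: der_andE1 (der_top _ _).
  exact: der_mp (der_prov (prov_dneg_intro _)) (der_top _ _).
Qed.

Lemma box_dia M p : prov (FIff (FBox M (FDia M p)) (FDia M p)).
Proof.
apply: prov_iffI; last exact: ax_persist.
exact: prov_imp_trans (ax_boxdia _ _ _) (prov_iffl (dia_dia M p)).
Qed.

Lemma dia_box M p : prov (FIff (FDia M (FBox M p)) (FDia M p)).
Proof.
apply: prov_iffI; apply/prov_dneg_mono/prov_imp_of_der/der_andI;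
  try exact: der_andE1 (der_top _ _).
- exact: der_mp (der_mp (der_prov (ax_boxT _ _ _)) (der_andE2 (der_top _ _)))
    (der_andE1 (der_top _ _)).
- exact: der_mp (der_prov (ax_persist _ _ _)) (der_andE2 (der_top _ _)).
Qed.

Definition mod_meet h h' : modality := if h is MBox then h' else MDia.

Definition prefix_mod (hs : seq modality) : modality :=
  if all is_box hs then MBox else MDia.

Lemma apply_mod_comp M h h' p :
  prov (FIff (apply_mod CM M h (apply_mod CM M h' p))
             (apply_mod CM M (mod_meet h h') p)).
Proof.
case: h; case: h'; [exact: box_box | exact: box_dia | exact: dia_box | exact: dia_dia].
Qed.

Lemma apply_prefix_collapse M h hs p :
  prov (FIff (apply_prefix CM M (h :: hs) p) (apply_mod CM M (prefix_mod (h :: hs)) p)).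
Proof.
elim: hs h => [|h' hs IH] h.
  by case: h; apply: prov_iff_refl.
apply: prov_iff_trans (apply_mod_congr M h (IH h')) _.
have -> : prefix_mod [:: h, h' & hs] = mod_meet h (prefix_mod (h' :: hs)).
  by case: h.
exact: apply_mod_comp.
Qed.

End LIiPTheory.

Theorem corollary3 (A : finType) (CM : A) (Data : Type)
  (M : msg A Data) (phi : form A Data) (hs : seq modality) :
  hs <> [::] ->
  (all is_box hs ->
     prov CM (FIff (apply_prefix CM M hs phi) (FBox M phi))) /\
  (~~ all is_box hs ->
     prov CM (FIff (apply_prefix CM M hs phi) (FDia CM M phi))).
Proof.
case: hs => [//|h hs] _.
have := apply_prefix_collapse CM M h hs phi.
by rewrite /prefix_mod; case: (all is_box _).
Qed.
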